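(* \begin{enumerate} \item Both maps $u,v:V(\mathcal{T}\mathcal{L})\mapsto \mathbb C$ define triangular lattices with $MR=-1$. In other words, if $\mathfrak{z}_1,\mathfrak{z}_2,\ldots,\mathfrak{z}_6$ are the vertices (listed counterclockwise) of any elementary hexagon of any of the hexagonal sublattices $\mathcal{H}\mathcal{L}_j$ $(j=0,1,2)$, and if $u_k=u(\mathfrak{z}_k)$ and $v_k=v(\mathfrak{z}_k)$, then there hold both the equations \begin{equation} M(u_1,u_2,\ldots,u_6)=-1 \end{equation} and \begin{equation} M(v_1,v_2,\ldots,v_6)=-1. \end{equation} \item Given a triangular lattice $u:V(\mathcal{T}\mathcal{L})\mapsto\mathbb C$ with $MR=-1$, there exists a unique, up to an affine transformation $v\mapsto av+b$, function $v:V(\mathcal{T}\mathcal{L})\mapsto\mathbb C$ such that the equation $\frac{u(\mathfrak{z}_2)-u(\mathfrak{z}_1)}{u(\mathfrak{z}_3)-u(\mathfrak{z}_2)}=\frac{v(\mathfrak{z}_3)-v(\mathfrak{z}_2)}{v(\mathfrak{z}_1)-v(\mathfrak{z}_3)}$ is satisfied everywhere. This function also defines a triangular lattice with $MR=-1$. \item Given a pair of complex--valued functions $(u,v)$ defined on $V(\mathcal{T}\mathcal{L})$ and satisfying this equation everywhere, there exists a unique, up to an affine transformation, function $w:V(\mathcal{T}\mathcal{L})\mapsto\mathbb C$ such that the pairs $(v,w)$ and $(w,u)$ satisfy the same equation. The function $w$ also defines a triangular lattice with $MR=-1$. \end{enumerate}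
   Context: $\mathcal{T}\mathcal{L}$ is the regular triangular lattice with vertices $k+\ell\omega+m\omega^2$, $\omega=e^{2\pi i/3}$, and edges of length 1; $\mathcal{H}\mathcal{L}_j$ ($j=0,1,2$) is its hexagonal sublattice with vertices satisfying $k+\ell+m\not\equiv j\pmod 3$, whose elementary hexagons have vertices $\mathfrak{z}'+\varepsilon^k$, $\varepsilon=e^{\pi i/3}$, around centers $\mathfrak{z}'$ with $k+\ell+m\equiv j\pmod 3$. The multi-ratio is $M(w_1,\dots,w_6)=\frac{(w_1-w_2)(w_3-w_4)(w_5-w_6)}{(w_2-w_3)(w_4-w_5)(w_6-w_1)}$; a map on $V(\mathcal{T}\mathcal{L})$ defines a triangular lattice with $MR=-1$ if this multi-ratio equals $-1$ on every elementary hexagon (vertices counterclockwise) of every $\mathcal{H}\mathcal{L}_j$. In part 1, $u,v$ are the fields of a solution of the $fgh$--system, i.e. they satisfy the equation $\frac{u(\mathfrak{z}_2)-u(\mathfrak{z}_1)}{u(\mathfrak{z}_3)-u(\mathfrak{z}_2)}=\frac{v(\mathfrak{z}_3)-v(\mathfrak{z}_2)}{v(\mathfrak{z}_1)-v(\mathfrak{z}_3)}$ on every elementary triangle with consecutive vertices $\mathfrak{z}_1,\mathfrak{z}_2,\mathfrak{z}_3$ such that $\mathfrak{z}_2-\mathfrak{z}_1,\mathfrak{z}_3-\mathfrak{z}_2,\mathfrak{z}_1-\mathfrak{z}_3\in\{1,\omega,\omega^2\}$ (positively oriented triangle). *)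

From HB Require Import structures.
From mathcomp Require Import all_boot all_order all_algebra.
From mathcomp Require Import reals complex.
Set Implicit Arguments. Unset Strict Implicit. Unset Printing Implicit Defensive.
Import Order.TTheory GRing.Theory Num.Theory.
Local Open Scope ring_scope.

(* A vertex k + l w + m w^2 of the triangular lattice TL (w = e^{2 pi i/3})
   is encoded by the pair (a,b) : int * int standing for the point a + b w
   (take a = k - m, b = l - m); this is a bijection Z^2 -> V(TL). *)
Definition vtx := (int * int)%type.
Definition vadd (z d : vtx) : vtx := (z.1 + d.1, z.2 + d.2).
Definition vsub (z d : vtx) : vtx := (z.1 - d.1, z.2 - d.2).

(* The three edge vectors 1, w, w^2 = -1 - w. *)
Definition unit_dir (d : vtx) : bool :=
  [|| d == (1, 0), d == (0, 1) | d == (-1, -1)].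

Definition pos_triangle (z1 z2 z3 : vtx) : bool :=
  [&& unit_dir (vsub z2 z1), unit_dir (vsub z3 z2) & unit_dir (vsub z1 z3)].

(* eps^k, eps = e^{i pi/3}: 1, 1+w, w, -1, w^2=-1-w, -w  (counterclockwise). *)
Definition eps_dir (k : nat) : vtx :=
  nth (0, 0) [:: (1, 0); (1, 1); (0, 1); (-1, 0); (-1, -1); (0, -1)] (k %% 6).

(* k + l + m mod 3 of the vertex a + b w, i.e. (a + b) mod 3. *)
Definition vclass (z : vtx) : int := ((z.1 + z.2) %% 3)%Z.

Definition multi_ratio (F : fieldType) (w1 w2 w3 w4 w5 w6 : F) : F :=
  ((w1 - w2) * (w3 - w4) * (w5 - w6)) / ((w2 - w3) * (w4 - w5) * (w6 - w1)).

(* u defines a triangular lattice with MR = -1: on every elementary hexagon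
   (vertices c + eps^(s+k), k = 0..5, listed counterclockwise starting from
   any vertex s) of every HL_j (center c with class j), the multi-ratio is
   defined (nonzero denominator) and equals -1. *)
Definition MR_minus1 (F : fieldType) (u : vtx -> F) : Prop :=
  forall (j : 'I_3) (c : vtx), vclass c = (j : nat)%:Z -> forall s : nat,
    let w k := u (vadd c (eps_dir (s + k))) in
    (w 1%N - w 2%N) * (w 3%N - w 4%N) * (w 5%N - w 0%N) != 0 /\
    multi_ratio (w 0%N) (w 1%N) (w 2%N) (w 3%N) (w 4%N) (w 5%N) = -1.

Definition fgh_eq (F : fieldType) (u v : vtx -> F) : Prop :=
  forall z1 z2 z3 : vtx, pos_triangle z1 z2 z3 ->
    [/\ u z3 - u z2 != 0, v z1 - v z3 != 0 &
        (u z2 - u z1) / (u z3 - u z2) = (v z3 - v z2) / (v z1 - v z3)].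

(* On a positively oriented triangle the fgh-equation says that the u-image of
   the triangle is the v-image with its edges cyclically relabelled, scaled by a
   common nonzero factor l.  Around a hexagon the six triangles at its centre
   alternate in orientation; expressing every rim edge of u (or of v) through
   the spokes shows that the two products of alternate rim edges coincide,
   which is the relation M = -1.

   Conversely, if u has M = -1, the factors l of the triangles are forced, up to
   one global constant, by a closed multiplicative 1-form on Z^2: its
   closedness around a vertex is exactly the hexagon relation of u there.
   Integrating it, and then the additive 1-form of v-increments that it
   determines, produces v.  Two solutions v, v' have the same ratio of
   increments along the three edges of every triangle, so this ratio is
   constant and v' is affine in v.  The third part applies the second to v:
   the relation composes cyclically, (u, v) and (v, w) giving (w, u). *)

From HB Require Import structures.
From mathcomp Require Import all_boot all_order all_algebra.
From mathcomp Require Import reals complex.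
From mathcomp Require Import ring zify.
Import GRing.Theory Num.Theory.
Set Implicit Arguments. Unset Strict Implicit.
Local Open Scope ring_scope.

Section FghTriangle.
Variable F : fieldType.
Implicit Types u v w : vtx -> F.

Definition fgh_tri u v z1 z2 z3 : Prop :=
  exists l : F, [/\ l != 0,
    [/\ u z2 - u z1 != 0, u z3 - u z2 != 0 & u z1 - u z3 != 0] &
    [/\ u z2 - u z1 = l * (v z3 - v z2), u z3 - u z2 = l * (v z1 - v z3)
      & u z1 - u z3 = l * (v z2 - v z1)]].

Lemma fgh_tri_rot u v z1 z2 z3 : fgh_tri u v z1 z2 z3 -> fgh_tri u v z2 z3 z1.
Proof. by case=> l [l0 [n1 n2 n3] [e1 e2 e3]]; exists l. Qed.

Lemma fgh_tri_neq0l u v z1 z2 z3 : fgh_tri u v z1 z2 z3 ->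
  [/\ u z2 - u z1 != 0, u z3 - u z2 != 0 & u z1 - u z3 != 0].
Proof. by case=> l []. Qed.

Lemma fgh_tri_neq0r u v z1 z2 z3 : fgh_tri u v z1 z2 z3 ->
  [/\ v z3 - v z2 != 0, v z1 - v z3 != 0 & v z2 - v z1 != 0].
Proof.
case=> l [_ [n1 n2 n3] [e1 e2 e3]].
by split; [move: n1 | move: n2 | move: n3]; rewrite ?e1 ?e2 ?e3;
  apply: contraNneq => ->; rewrite mulr0.
Qed.

Lemma fgh_eqP u v : fgh_eq u v <->
  (forall z1 z2 z3, pos_triangle z1 z2 z3 -> fgh_tri u v z1 z2 z3).
Proof.
split=> [uv z1 z2 z3 p | T z1 z2 z3 /T t].
- have p2 : pos_triangle z2 z3 z1 by move: p => /and3P[*]; apply/and3P.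
  have p3 : pos_triangle z3 z1 z2 by move: p2 => /and3P[*]; apply/and3P.
  have [n2 m1 r] := uv _ _ _ p; have [n3 m2 _] := uv _ _ _ p2.
  have [n1 _ _] := uv _ _ _ p3.
  have e1 : u z2 - u z1 = (u z3 - u z2) * (v z3 - v z2) / (v z1 - v z3).
    by rewrite -[LHS](divfK n2) r; field.
  exists ((u z3 - u z2) / (v z1 - v z3)); split.
  + by rewrite mulf_neq0 // invr_eq0.
  + by [].
  + have -> : u z1 - u z3 = - (u z2 - u z1) - (u z3 - u z2) by ring.
    by rewrite e1; split; field.
- have [_ nv _] := fgh_tri_neq0r t.
  case: t => l [l0 [_ nu _] [e1 e2 _]]; split => //.
  by rewrite e1 e2; field; rewrite l0 nv.
Qed.

Lemma fgh_tri_cycle u v w z1 z2 z3 :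
  fgh_tri u v z1 z2 z3 -> fgh_tri v w z1 z2 z3 -> fgh_tri w u z1 z2 z3.
Proof.
move=> uv vw; have [w1 w2 w3] := fgh_tri_neq0r vw.
case: uv => l [l0 _ [e1 e2 e3]]; case: vw => m [m0 _ [f1 f2 f3]].
exists (l * m)^-1; split => //; first by rewrite invr_eq0 mulf_neq0.
by split; [rewrite e2 f3 | rewrite e3 f1 | rewrite e1 f2]; field; rewrite l0 m0.
Qed.

Lemma fgh_eq_cycle u v w : fgh_eq u v -> fgh_eq v w -> fgh_eq w u.
Proof.
move=> /fgh_eqP uv /fgh_eqP vw; apply/fgh_eqP => z1 z2 z3 p.
exact: fgh_tri_cycle (uv _ _ _ p) (vw _ _ _ p).
Qed.

Lemma fgh_tri_edgel u v z1 z2 z3 : fgh_tri u v z1 z2 z3 ->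
  u z3 - u z2 = (u z1 - u z3) * (v z1 - v z3) / (v z2 - v z1).
Proof.
move=> t; have [_ _ nv] := fgh_tri_neq0r t.
by case: t => l [_ _ [_ -> ->]]; field.
Qed.

Lemma fgh_tri_edger u v z1 z2 z3 : fgh_tri u v z1 z2 z3 ->
  v z3 - v z2 = (u z2 - u z1) * (v z2 - v z1) / (u z1 - u z3).
Proof.
move=> t; have [_ _ nv] := fgh_tri_neq0r t.
by case: t => l [l0 _ [-> _ ->]]; field; rewrite l0 nv.
Qed.

Definition incr_ratio v1 v2 (z z' : vtx) := (v2 z' - v2 z) / (v1 z' - v1 z).

Lemma fgh_tri_incr_ratio u v1 v2 z1 z2 z3 :
  fgh_tri u v1 z1 z2 z3 -> fgh_tri u v2 z1 z2 z3 ->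
  incr_ratio v1 v2 z1 z2 = incr_ratio v1 v2 z2 z3 /\
  incr_ratio v1 v2 z2 z3 = incr_ratio v1 v2 z3 z1.
Proof.
move=> t1 t2; have [a1 a2 a3] := fgh_tri_neq0r t1.
case: t1 => l [l0 _ [e1 e2 e3]]; case: t2 => m [m0 _ [f1 f2 f3]].
have scale x y y' : x = l * (v1 y' - v1 y) -> x = m * (v2 y' - v2 y) ->
    v2 y' - v2 y = l / m * (v1 y' - v1 y).
  by move=> -> em; apply: (mulfI m0); rewrite -em; field.
by rewrite /incr_ratio (scale _ _ _ e1 f1) (scale _ _ _ e2 f2) (scale _ _ _ e3 f3) !mulfK.
Qed.
End FghTriangle.

Lemma pos_triangle_translate c d1 d2 :
  pos_triangle c (vadd c d1) (vadd c d2) = pos_triangle (0, 0) d1 d2.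
Proof.
case: c d1 d2 => [a b] [x y] [p q].
by rewrite /pos_triangle /vsub /vadd /=; congr [&& unit_dir (_, _), unit_dir (_, _)
  & unit_dir (_, _)]; ring.
Qed.

Lemma pos_triangle_up a b : pos_triangle (a, b) (a + 1, b) (a + 1, b + 1).
Proof.
by have := pos_triangle_translate (a, b) (1, 0) (1, 1); rewrite /vadd /= addr0 => ->.
Qed.

Lemma pos_triangle_down a b : pos_triangle (a, b) (a, b + 1) (a + 1, b + 1).
Proof.
by have := pos_triangle_translate (a, b) (0, 1) (1, 1); rewrite /vadd /= addr0 => ->.
Qed.

Lemma unit_dirP d : unit_dir d -> [\/ d = (1, 0), d = (0, 1) | d = (-1, -1)].
Proof. by case/or3P=> /eqP ->; [constructor 1 | constructor 2 | constructor 3]. Qed.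

(* The three edge vectors sum to 0, so they are (1,0), (0,1), (-1,-1) in some
   order: cyclic orders give rotated up triangles, the others rotated down ones. *)
Lemma pos_triangle_ind (P : vtx -> vtx -> vtx -> Prop) :
  (forall a b, P (a, b) (a + 1, b) (a + 1, b + 1)) ->
  (forall a b, P (a, b) (a, b + 1) (a + 1, b + 1)) ->
  (forall z1 z2 z3, P z1 z2 z3 -> P z2 z3 z1) ->
  forall z1 z2 z3, pos_triangle z1 z2 z3 -> P z1 z2 z3.
Proof.
move=> Pup Pdown Prot [x1 y1] [x2 y2] [x3 y3] /and3P [h1 h2 h3].
have Peq z1 z2 z3 z1' z2' z3' :
    P z1 z2 z3 -> z1 = z1' -> z2 = z2' -> z3 = z3' -> P z1' z2' z3'.
  by move=> p <- <- <-.
case/unit_dirP: h1 => -[e1 e1']; case/unit_dirP: h2 => -[e2 e2'];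
case/unit_dirP: h3 => -[e3 e3'].
all: first [ exfalso; lia
  | apply: Peq (Pup x1 y1) _ _ _; congr pair; lia
  | apply: Peq (Prot _ _ _ (Pup (x1 - 1) y1)) _ _ _; congr pair; lia
  | apply: Peq (Prot _ _ _ (Prot _ _ _ (Pup (x1 - 1) (y1 - 1)))) _ _ _; congr pair; lia
  | apply: Peq (Pdown x1 y1) _ _ _; congr pair; lia
  | apply: Peq (Prot _ _ _ (Pdown x1 (y1 - 1))) _ _ _; congr pair; lia
  | apply: Peq (Prot _ _ _ (Prot _ _ _ (Pdown (x1 - 1) (y1 - 1)))) _ _ _; congr pair; lia ].
Qed.

Lemma int_ind_step (P : int -> Prop) : P 0 ->
  (forall n, P n -> P (n + 1)) -> (forall n, P (n + 1) -> P n) -> forall n, P n.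
Proof.
move=> P0 PS PP; elim/int_ind=> // n Pn.
  by rewrite -addn1 PoszD; apply: PS.
by apply: PP; rewrite -addn1 PoszD opprD addrNK.
Qed.

Lemma translation_invariant_const (T : Type) (g : vtx -> T) :
  (forall a b, g (a + 1, b) = g (a, b)) -> (forall a b, g (a, b + 1) = g (a, b)) ->
  forall z, g z = g (0, 0).
Proof.
move=> gx gy [a b]; transitivity (g (0, b)).
- by elim/int_ind_step: a => // n IH; rewrite -IH gx.
- by elim/int_ind_step: b => // n IH; rewrite -IH gy.
Qed.

Lemma vclass_ord (c : vtx) : exists j : 'I_3, vclass c = j%:Z.
Proof.
have : 0 <= vclass c < 3 by rewrite /vclass modz_ge0 ?ltz_pmod.
by case: (vclass c) => // n /andP[_ n3]; exists (Ordinal n3).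
Qed.

Section Hexagon.
Variable F : fieldType.
Implicit Types (W : nat -> F) (u v : vtx -> F).

Definition hexagon u c (n : nat) : F := u (vadd c (eps_dir n)).

Definition hexagon_form W : F :=
  (W 1%N - W 0%N) * (W 3%N - W 2%N) * (W 5%N - W 4%N) -
  (W 1%N - W 2%N) * (W 3%N - W 4%N) * (W 5%N - W 0%N).

Definition MR_at W (s : nat) : Prop :=
  let w k := W (s + k)%N in
  (w 1%N - w 2%N) * (w 3%N - w 4%N) * (w 5%N - w 0%N) != 0 /\
  multi_ratio (w 0%N) (w 1%N) (w 2%N) (w 3%N) (w 4%N) (w 5%N) = -1.

Definition hexagon_rel W : Prop :=
  (forall k, W k.+1 - W k != 0) /\ hexagon_form W = 0.

Lemma hexagonD6 u c n : hexagon u c (n + 6)%N = hexagon u c n.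
Proof. by rewrite /hexagon /eps_dir modnDr. Qed.

Lemma hexagon_rim_neq0 W : (forall n, W (n + 6)%N = W n) ->
  W 1%N - W 0%N != 0 -> W 1%N - W 2%N != 0 -> W 3%N - W 2%N != 0 ->
  W 3%N - W 4%N != 0 -> W 5%N - W 4%N != 0 -> W 5%N - W 0%N != 0 ->
  forall k, W k.+1 - W k != 0.
Proof.
move=> W6 e0 e1 e2 e3 e4 e5; elim/ltn_ind=> k IH.
have [k6 | k6] := ltnP k 6; last by rewrite -(subnK k6) -addSn !W6; apply: IH; lia.
have W60 : W 6%N = W 0%N := W6 0%N.
by clear IH; move: k6; case: k => [|[|[|[|[|[|//]]]]]] _; rewrite ?W60 // -oppr_eq0 opprB.
Qed.

Lemma hexagon_formS W : W 6%N = W 0%N -> hexagon_form (fun k => W k.+1) = hexagon_form W.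
Proof. by move=> W6; rewrite /hexagon_form W6; ring. Qed.

Lemma hexagon_form_shift W s : (forall n, W (n + 6)%N = W n) ->
  hexagon_form (fun k => W (s + k)%N) = hexagon_form W.
Proof.
move=> W6; elim: s => [|s <-] //.
rewrite -(hexagon_formS (W := fun k => W (s + k)%N)); last by rewrite /= addn0 W6.
by rewrite /hexagon_form !addSnnS.
Qed.

Lemma multi_ratio_eqN1 (w : nat -> F) :
  (w 1%N - w 2%N) * (w 3%N - w 4%N) * (w 5%N - w 0%N) != 0 ->
  multi_ratio (w 0%N) (w 1%N) (w 2%N) (w 3%N) (w 4%N) (w 5%N) = -1 <->
  hexagon_form w = 0.
Proof.
rewrite /multi_ratio; set N := (w 0%N - _) * _ * _; set D := (w 1%N - _) * _ * _.
move=> D0; have -> : hexagon_form w = - (N + D) by rewrite /hexagon_form /N /D; ring.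
split=> [MR | /eqP].
  by have := divfK D0 N; rewrite MR mulN1r => <-; rewrite addNr oppr0.
by rewrite oppr_eq0 addr_eq0 => /eqP ->; rewrite mulNr divff.
Qed.

Lemma hexagon_relP W : (forall n, W (n + 6)%N = W n) ->
  (forall s, MR_at W s) <-> hexagon_rel W.
Proof.
move=> W6; split=> [MR | [edges form] s].
- have [D0 MR0] := MR 0%N; have [D1 _] := MR 1%N.
  split; last exact/(multi_ratio_eqN1 D0).
  move: D0 D1; rewrite !add0n !add1n (W6 0%N) !mulf_eq0 !negb_or.
  move=> /andP[/andP[n12 n34] n50] /andP[/andP[n23 n45] n01].
  by apply: hexagon_rim_neq0; rewrite // -oppr_eq0 opprB.
- have edge k : W (s + k)%N - W (s + k.+1)%N != 0.
    by rewrite addnS -oppr_eq0 opprB.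
  have D : (W (s + 1)%N - W (s + 2)%N) * (W (s + 3)%N - W (s + 4)%N) *
           (W (s + 5)%N - W (s + 0)%N) != 0.
    by rewrite -[in W (s + 0)%N](W6 (s + 0)%N) -addnA !mulf_neq0.
  split=> //; apply/(@multi_ratio_eqN1 (fun k => W (s + k)%N) D).
  by rewrite hexagon_form_shift.
Qed.

Lemma MR_minus1P u : MR_minus1 u <-> forall c, hexagon_rel (hexagon u c).
Proof.
split=> [uMR c | urel j c _ s].
- have [j cj] := vclass_ord c.
  by apply/hexagon_relP => [n | s]; [exact: hexagonD6 | exact: uMR j c cj s].
- exact: (hexagon_relP (hexagonD6 u c)).2 (urel c) s.
Qed.

(* Through the triangle next to it, each rim edge of [u] (resp. [v]) is a
   product of spokes divided by a spoke of [v] (resp. [u]); both products of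
   alternate rim edges then reduce to the same monomial in the spokes. *)
Lemma fgh_hexagon_rel u v c : fgh_eq u v ->
  hexagon_rel (hexagon u c) /\ hexagon_rel (hexagon v c).
Proof.
move/fgh_eqP => uv.
have tri k1 k2 : pos_triangle (0, 0) (eps_dir k1) (eps_dir k2) ->
    fgh_tri u v c (vadd c (eps_dir k1)) (vadd c (eps_dir k2)).
  by move=> p; apply: uv; rewrite pos_triangle_translate.
have T0 := tri 0%N 1%N isT; have T1 := tri 2%N 1%N isT; have T2 := tri 2%N 3%N isT.
have T3 := tri 4%N 3%N isT; have T4 := tri 4%N 5%N isT; have T5 := tri 0%N 5%N isT.
have [_ u01 uc1] := fgh_tri_neq0l T0; have [_ u21 _] := fgh_tri_neq0l T1.
have [_ u23 uc3] := fgh_tri_neq0l T2; have [_ u43 _] := fgh_tri_neq0l T3.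
have [_ u45 uc5] := fgh_tri_neq0l T4; have [_ u05 _] := fgh_tri_neq0l T5.
have [v01 _ vc0] := fgh_tri_neq0r T0; have [v21 _ _] := fgh_tri_neq0r T1.
have [v23 _ vc2] := fgh_tri_neq0r T2; have [v43 _ _] := fgh_tri_neq0r T3.
have [v45 _ vc4] := fgh_tri_neq0r T4; have [v05 _ _] := fgh_tri_neq0r T5.
split; split.
- exact: hexagon_rim_neq0 (hexagonD6 u c) u01 u21 u23 u43 u45 u05.
- rewrite /hexagon_form /hexagon (fgh_tri_edgel T0) (fgh_tri_edgel T1) (fgh_tri_edgel T2).
  by rewrite (fgh_tri_edgel T3) (fgh_tri_edgel T4) (fgh_tri_edgel T5); field;
    rewrite vc0 vc2 vc4.
- exact: hexagon_rim_neq0 (hexagonD6 v c) v01 v21 v23 v43 v45 v05.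
- rewrite /hexagon_form /hexagon (fgh_tri_edger T0) (fgh_tri_edger T1) (fgh_tri_edger T2).
  by rewrite (fgh_tri_edger T3) (fgh_tri_edger T4) (fgh_tri_edger T5); field;
    rewrite uc1 uc3 uc5.
Qed.

Lemma fgh_MR_minus1 u v : fgh_eq u v -> MR_minus1 u /\ MR_minus1 v.
Proof. by move=> uv; split; apply/MR_minus1P => c; have [] := fgh_hexagon_rel c uv. Qed.
End Hexagon.

Lemma fgh_unique (F : fieldType) (u v1 v2 : vtx -> F) : fgh_eq u v1 -> fgh_eq u v2 ->
  exists a b, a != 0 /\ forall z, v2 z = a * v1 z + b.
Proof.
move=> /fgh_eqP uv1 /fgh_eqP uv2.
have up a b := fgh_tri_incr_ratio (uv1 _ _ _ (pos_triangle_up a b))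
  (uv2 _ _ _ (pos_triangle_up a b)).
have down a b := fgh_tri_incr_ratio (uv1 _ _ _ (pos_triangle_down a b))
  (uv2 _ _ _ (pos_triangle_down a b)).
pose rho a b := incr_ratio v1 v2 (a, b) (a + 1, b).
have rho_vert a b : incr_ratio v1 v2 (a, b) (a, b + 1) = rho a b.
  by rewrite /rho; have [-> ->] := down a b; have [-> ->] := up a b.
have rho_const : forall z, rho z.1 z.2 = rho 0 0.
  apply: translation_invariant_const => a b; rewrite /rho /=.
  - have [-> ->] := up (a + 1) b; have [<- <-] := down (a + 1) b.
    by have [-> _] := up a b.
  - by have [_ ->] := down a b; have [-> ->] := up a b.
have affine z z' : v1 z' - v1 z != 0 ->
    v2 z' - incr_ratio v1 v2 z z' * v1 z' = v2 z - incr_ratio v1 v2 z z' * v1 z.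
  by move=> n; rewrite /incr_ratio; field.
have [_ _ n1] := fgh_tri_neq0r (uv1 _ _ _ (pos_triangle_up 0 0)).
have [_ _ n2] := fgh_tri_neq0r (uv2 _ _ _ (pos_triangle_up 0 0)).
exists (rho 0 0), (v2 (0, 0) - rho 0 0 * v1 (0, 0)); split.
  by rewrite /rho /incr_ratio mulf_neq0 ?invr_eq0.
move=> z; have -> : v2 (0, 0) - rho 0 0 * v1 (0, 0) = v2 z - rho 0 0 * v1 z.
  symmetry; apply: (translation_invariant_const (g := fun z => v2 z - rho 0 0 * v1 z)).
  - move=> a b; have [_ _ n] := fgh_tri_neq0r (uv1 _ _ _ (pos_triangle_up a b)).
    by rewrite -(rho_const (a, b)) /=; apply: affine.
  - move=> a b; have [_ _ n] := fgh_tri_neq0r (uv1 _ _ _ (pos_triangle_down a b)).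
    by rewrite -(rho_const (a, b)) /= -rho_vert; apply: affine.
by rewrite addrC subrK.
Qed.

Section ClosedFormIntegration.
Variables (G : Type) (mul : G -> G -> G) (inv : G -> G) (one : G).
Hypotheses (mulA : associative mul) (mulC : commutative mul)
  (mul1 : left_id one mul) (mulV : left_inverse one inv mul).

Let mulCA : left_commutative mul.
Proof. by move=> x y z; rewrite !mulA (mulC x). Qed.

Let mulKV x y : mul x (mul (inv x) y) = y.
Proof. by rewrite mulA (mulC x) mulV mul1. Qed.

Let mulI x : injective (mul x).
Proof. by move=> y z /(congr1 (mul (inv x))); rewrite !mulA mulV !mul1. Qed.

Fixpoint prod_up (f : int -> G) (n : nat) : G :=
  if n is m.+1 then mul (f m) (prod_up f m) else one.

Fixpoint prod_down (f : int -> G) (n : nat) : G :=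
  if n is m.+1 then mul (inv (f (Negz m))) (prod_down f m) else one.

(* [int_prod f z] is [f (z - 1) * ... * f 0] for [z >= 0] and the inverse of
   [f z * ... * f (-1)] for [z < 0]; recall [Negz m = - m.+1]. *)
Definition int_prod (f : int -> G) (z : int) : G :=
  match z with Posz n => prod_up f n | Negz n => prod_down f n.+1 end.

Lemma int_prodS f z : int_prod f (z + 1) = mul (f z) (int_prod f z).
Proof.
case: z => [n|[|n]]; first by rewrite -[Posz n + 1]/(Posz (n + 1)) addn1.
  by rewrite /= mulKV.
by rewrite (_ : Negz n.+1 + 1 = Negz n) /= ?mulKV //; lia.
Qed.

Lemma closed_form_exact (X Y : int -> int -> G) :
  (forall a b, mul (X a b) (Y (a + 1) b) = mul (Y a b) (X a (b + 1))) ->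
  exists L : int -> int -> G,
    (forall a b, L (a + 1) b = mul (X a b) (L a b)) /\
    (forall a b, L a (b + 1) = mul (Y a b) (L a b)).
Proof.
move=> closedXY; pose K a := int_prod (Y a).
have swap a b :
    mul (Y (a + 1) b) (mul (X a b) (K a b)) = mul (X a (b + 1)) (mul (Y a b) (K a b)).
  by rewrite !mulA (mulC (Y (a + 1) b)) closedXY (mulC (X a (b + 1))).
have XK a b : mul (X a 0) (K (a + 1) b) = mul (X a b) (K a b).
  elim/int_ind_step: b => [|b IH|b IH]; first by [].
  - by rewrite /K !int_prodS -/(K _) mulCA IH swap.
  - apply: (@mulI (Y (a + 1) b)); move: IH; rewrite /K !int_prodS -/(K _) => IH.
    by rewrite mulCA IH swap.
exists (fun a b => mul (int_prod (X^~ 0) a) (K a b)); split=> a b.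
- by rewrite int_prodS /= -mulA mulCA XK mulCA.
- by rewrite /K int_prodS mulCA.
Qed.
End ClosedFormIntegration.

Lemma closed_form_exactD (V : zmodType) (X Y : int -> int -> V) :
  (forall a b, X a b + Y (a + 1) b = Y a b + X a (b + 1)) ->
  exists L : int -> int -> V,
    (forall a b, L (a + 1) b = X a b + L a b) /\ (forall a b, L a (b + 1) = Y a b + L a b).
Proof. exact: closed_form_exact (@addrA V) (@addrC V) (@add0r V) (@addNr V) X Y. Qed.

Lemma closed_form_exactM (F : fieldType) (X Y : int -> int -> F) :
  (forall a b, X a b != 0) -> (forall a b, Y a b != 0) ->
  (forall a b, X a b * Y (a + 1) b = Y a b * X a (b + 1)) ->
  exists L : int -> int -> F, [/\ forall a b, L a b != 0,
    forall a b, L (a + 1) b = X a b * L a b & forall a b, L a (b + 1) = Y a b * L a b].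
Proof.
move=> X0 Y0 closedXY; pose nzF := {x : F | x != 0}.
pose mul (x y : nzF) : nzF := exist _ (val x * val y) (mulf_neq0 (valP x) (valP y)).
pose inv (x : nzF) : nzF := exist _ (val x)^-1 (invr_neq0 (valP x)).
pose one : nzF := exist _ 1 (oner_neq0 F).
have mulA : associative mul by move=> x y z; apply: val_inj; rewrite /= mulrA.
have mulC : commutative mul by move=> x y; apply: val_inj; rewrite /= mulrC.
have mul1 : left_id one mul by move=> x; apply: val_inj; rewrite /= mul1r.
have mulV : left_inverse one inv mul.
  by move=> x; apply: val_inj; rewrite /= mulVf // (valP x).
pose Xnz a b : nzF := exist _ (X a b) (X0 a b).
pose Ynz a b : nzF := exist _ (Y a b) (Y0 a b).
have closed a b : mul (Xnz a b) (Ynz (a + 1) b) = mul (Ynz a b) (Xnz a (b + 1)).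
  by apply: val_inj; exact: closedXY.
have [L [Lx Ly]] := closed_form_exact mulA mulC mul1 mulV closed.
exists (fun a b => val (L a b)); split=> a b; first exact: (valP (L a b)).
  by rewrite Lx.
by rewrite Ly.
Qed.

Section DualLattice.
Variables (F : fieldType) (u : vtx -> F).
Hypothesis u_rel : forall c, hexagon_rel (hexagon u c).

Lemma u_hor_neq0 a b : u (a + 1, b) - u (a, b) != 0.
Proof.
by have := (u_rel (a + 1, b + 1)).1 4%N; rewrite /hexagon /vadd /eps_dir /= !addr0 !addrK.
Qed.

Lemma u_vert_neq0 a b : u (a, b + 1) - u (a, b) != 0.
Proof.
have := (u_rel (a + 1, b + 1)).1 3%N; rewrite /hexagon /vadd /eps_dir /= !addr0 !addrK.
by rewrite -oppr_eq0 opprB.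
Qed.

Lemma u_diag_neq0 a b : u (a + 1, b + 1) - u (a, b) != 0.
Proof.
have := (u_rel (a + 1, b)).1 2%N; rewrite /hexagon /vadd /eps_dir /= !addr0 !addrK.
by rewrite -oppr_eq0 opprB.
Qed.

Lemma u_hexagon a b :
  (u (a + 1 + 1, b + 1) - u (a + 1, b)) * (u (a, b + 1) - u (a, b)) *
    (u (a + 1 + 1, b + 1 + 1) - u (a + 1, b + 1 + 1)) =
  (u (a + 1, b) - u (a, b)) * (u (a + 1, b + 1 + 1) - u (a, b + 1)) *
    (u (a + 1 + 1, b + 1 + 1) - u (a + 1 + 1, b + 1)).
Proof.
have := (u_rel (a + 1, b + 1)).2.
rewrite /hexagon_form /hexagon /vadd /eps_dir /= !addr0 !addrK => form.
by apply/eqP; rewrite -subr_eq0 -form; apply/eqP; ring.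
Qed.

(* Comparing the [v]-increment of a common edge computed in two adjacent
   triangles fixes the ratio of their factors [l]: [factor_step_x a b] is the
   ratio of the factors of the up triangles at [(a + 1, b)] and [(a, b)] (through
   the down triangle between them), [factor_step_y a b] that of the up triangles
   at [(a, b + 1)] and [(a, b)]. *)
Definition factor_step_x a b : F :=
  - (u (a + 1 + 1, b + 1) - u (a + 1, b)) * (u (a + 1 + 1, b + 1) - u (a + 1 + 1, b)) /
  ((u (a + 1, b) - u (a, b)) * (u (a + 1 + 1, b + 1) - u (a + 1, b + 1))).

Definition factor_step_y a b : F :=
  - (u (a + 1, b + 1) - u (a, b + 1)) * (u (a + 1, b + 1 + 1) - u (a, b + 1)) /
  ((u (a + 1, b + 1) - u (a + 1, b)) * (u (a, b + 1) - u (a, b))).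

Lemma factor_step_x_neq0 a b : factor_step_x a b != 0.
Proof.
by rewrite /factor_step_x !mulf_neq0 ?oppr_eq0 ?invr_eq0 ?mulf_neq0 ?u_hor_neq0
  ?u_vert_neq0 ?u_diag_neq0.
Qed.

Lemma factor_step_y_neq0 a b : factor_step_y a b != 0.
Proof.
by rewrite /factor_step_y !mulf_neq0 ?oppr_eq0 ?invr_eq0 ?mulf_neq0 ?u_hor_neq0
  ?u_vert_neq0 ?u_diag_neq0.
Qed.

Lemma factor_step_closed a b :
  factor_step_x a b * factor_step_y (a + 1) b = factor_step_y a b * factor_step_x a (b + 1).
Proof.
apply/eqP; rewrite -subr_eq0; apply/eqP.
transitivity (((u (a + 1 + 1, b + 1) - u (a + 1, b)) * (u (a, b + 1) - u (a, b)) *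
    (u (a + 1 + 1, b + 1 + 1) - u (a + 1, b + 1 + 1)) -
  (u (a + 1, b) - u (a, b)) * (u (a + 1, b + 1 + 1) - u (a, b + 1)) *
    (u (a + 1 + 1, b + 1 + 1) - u (a + 1 + 1, b + 1))) *
  ((u (a + 1 + 1, b + 1 + 1) - u (a + 1, b + 1)) /
   ((u (a + 1, b) - u (a, b)) * (u (a + 1, b + 1) - u (a + 1, b)) *
    (u (a, b + 1) - u (a, b)) * (u (a + 1 + 1, b + 1 + 1) - u (a + 1, b + 1 + 1))))).
  by rewrite /factor_step_x /factor_step_y; field;
    rewrite ?u_hor_neq0 ?u_vert_neq0 ?u_diag_neq0.
by rewrite u_hexagon subrr mul0r.
Qed.

Variable up_factor : int -> int -> F.
Hypotheses (up_factor_neq0 : forall a b, up_factor a b != 0)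
  (up_factor_x : forall a b, up_factor (a + 1) b = factor_step_x a b * up_factor a b)
  (up_factor_y : forall a b, up_factor a (b + 1) = factor_step_y a b * up_factor a b).

(* The factor of the down triangle at [(a, b)] is forced by the diagonal it
   shares with the up triangle there; [dual_dx] and [dual_dy] are the
   increments of [v] that these two triangles prescribe. *)
Definition down_factor a b : F :=
  up_factor a b * (u (a + 1, b + 1) - u (a, b + 1)) / (u (a + 1, b + 1) - u (a + 1, b)).

Definition dual_dx a b : F := - (u (a + 1, b + 1) - u (a, b)) / up_factor a b.
Definition dual_dy a b : F := - (u (a + 1, b + 1) - u (a, b)) / down_factor a b.

Lemma dual_closed a b :
  dual_dx a b + dual_dy (a + 1) b = dual_dy a b + dual_dx a (b + 1).
Proof.
rewrite /dual_dx /dual_dy /down_factor up_factor_x up_factor_y /factor_step_x /factor_step_y.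
by field; rewrite ?oppr_eq0 ?up_factor_neq0 ?u_hor_neq0 ?u_vert_neq0 ?u_diag_neq0.
Qed.

Variable V : int -> int -> F.
Hypotheses (V_x : forall a b, V (a + 1) b = dual_dx a b + V a b)
  (V_y : forall a b, V a (b + 1) = dual_dy a b + V a b).

Lemma dual_fgh : fgh_eq u (fun z => V z.1 z.2).
Proof.
have flip (x y : F) : x - y != 0 -> y - x != 0 by rewrite -oppr_eq0 opprB.
apply/fgh_eqP; apply: pos_triangle_ind => [a b | a b | ]; last exact: fgh_tri_rot.
- exists (up_factor a b); split => //.
    by split; rewrite ?u_hor_neq0 ?u_vert_neq0 // flip ?u_diag_neq0.
  rewrite /= V_y !V_x /dual_dx /dual_dy /down_factor up_factor_x /factor_step_x.
  by split; field; rewrite ?oppr_eq0 ?up_factor_neq0 ?u_hor_neq0 ?u_vert_neq0 ?u_diag_neq0.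
- exists (down_factor a b); split.
  + by rewrite /down_factor !mulf_neq0 ?invr_eq0 ?u_hor_neq0 ?u_vert_neq0.
  + by split; rewrite ?u_hor_neq0 ?u_vert_neq0 // flip ?u_diag_neq0.
  + rewrite /= V_x !V_y /dual_dx /dual_dy /down_factor up_factor_y /factor_step_y.
    by split; field;
      rewrite ?oppr_eq0 ?up_factor_neq0 ?u_hor_neq0 ?u_vert_neq0 ?u_diag_neq0.
Qed.
End DualLattice.

Lemma MR_minus1_dual (F : fieldType) (u : vtx -> F) :
  MR_minus1 u -> exists v : vtx -> F, fgh_eq u v.
Proof.
move/MR_minus1P => urel.
have [l [l0 l_x l_y]] := closed_form_exactM (factor_step_x_neq0 urel)
  (factor_step_y_neq0 urel) (factor_step_closed urel).
have [V [V_x V_y]] := closed_form_exactD (dual_closed urel l0 l_x l_y).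
by exists (fun z => V z.1 z.2); apply: dual_fgh V_x V_y.
Qed.

Theorem theorem13 (R : realType) :
  (forall u v : vtx -> R[i], fgh_eq u v -> MR_minus1 u /\ MR_minus1 v) /\
  (forall u : vtx -> R[i], MR_minus1 u ->
     exists v : vtx -> R[i],
       [/\ fgh_eq u v, MR_minus1 v &
           forall v' : vtx -> R[i], fgh_eq u v' ->
             exists a b : R[i], a != 0 /\ forall z, v' z = a * v z + b]) /\
  (forall u v : vtx -> R[i], fgh_eq u v ->
     exists w : vtx -> R[i],
       [/\ fgh_eq v w, fgh_eq w u, MR_minus1 w &
           forall w' : vtx -> R[i], fgh_eq v w' -> fgh_eq w' u ->
             exists a b : R[i], a != 0 /\ forall z, w' z = a * w z + b]).
Proof.
split; [exact: fgh_MR_minus1 | split].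
- move=> u /MR_minus1_dual [v uv]; exists v; split => //.
    exact: (fgh_MR_minus1 uv).2.
  by move=> v'; apply: fgh_unique.
- move=> u v uv; have [w vw] := MR_minus1_dual (fgh_MR_minus1 uv).2.
  exists w; split => //; first exact: fgh_eq_cycle uv vw.
    exact: (fgh_MR_minus1 vw).2.
  by move=> w' vw' _; apply: fgh_unique vw vw'.
Qed.
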